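(* Let $\lambda\supseteq\mu$ be partitions and $j\in\mathbb Z$, and suppose $\mu$ has an addable node in column $j$. If there exists a cover-expansive Dyck tiling of $\lambda\setminus\mu$, then $\lambda$ has either an addable node or a removable node in column $j$.
   Context: Partitions are identified with Young diagrams $\{(a,b)\in\mathbb N^2:b\le\lambda_a\}$; nodes are elements of $\mathbb N^2$; $(a,b)$ has height $a+b$ and lies in column $b-a$ (smaller column = further left). An addable node of $\lambda$ is a node not in $\lambda$ whose addition gives a partition; a removable node is a node of $\lambda$ whose removal gives a partition. $\mathtt{NE}(\mathfrak n)=\mathfrak n+(0,1)$, $\mathtt{SW}(\mathfrak n)=\mathfrak n-(0,1)$, $\mathtt{SE}(\mathfrak n)=\mathfrak n-(1,0)$. A tile is a finite nonempty set of nodes orderable $\mathfrak n_1,\dots,\mathfrak n_r$ with $\mathfrak n_{i+1}\in\{\mathtt{NE}(\mathfrak n_i),\mathtt{SE}(\mathfrak n_i)\}$; start = leftmost node, end = rightmost node; Dyck tile if start and end both attain the maximal height of its nodes. A Dyck tiling of $\lambda\setminus\mu$ is a partition of it into Dyck tiles. It is cover-expansive if whenever $\mathfrak a,\mathtt{SE}(\mathfrak a)\in\lambda\setminus\mu$, the tile of $\mathtt{SE}(\mathfrak a)$ starts weakly left of the start of the tile of $\mathfrak a$, and whenever $\mathfrak a,\mathtt{SW}(\mathfrak a)\in\lambda\setminus\mu$, the tile of $\mathtt{SW}(\mathfrak a)$ ends weakly right of the end of the tile of $\mathfrak a$. *)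

From mathcomp Require Import all_boot all_algebra.
Set Implicit Arguments. Unset Strict Implicit. Unset Printing Implicit Defensive.
Import GRing.Theory Num.Theory.

(* Nodes are pairs (a,b) of positive naturals (row a, column-index b). *)
Definition node := (nat * nat)%type.
Definition is_node (n : node) : bool := (0 < n.1) && (0 < n.2).

Definition is_partition (l : seq nat) : bool :=
  sorted geq l && all (fun x => 0 < x) l.

Definition in_diag (l : seq nat) (n : node) : bool :=
  is_node n && (n.2 <= nth 0 l n.1.-1).

Definition in_skew (l m : seq nat) (n : node) : bool :=
  in_diag l n && ~~ in_diag m n.

Definition height (n : node) : nat := n.1 + n.2.
Definition ncol (n : node) : int := (n.2%:Z - n.1%:Z)%R.

Definition NE (n : node) : node := (n.1, n.2.+1).
Definition SW (n : node) : node := (n.1, n.2.-1).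
Definition SE (n : node) : node := (n.1.-1, n.2).

Definition addable (l : seq nat) (n : node) : Prop :=
  ~~ in_diag l n /\
  exists nu, is_partition nu /\ forall x, in_diag nu x = in_diag l x || (x == n).
Definition removable (l : seq nat) (n : node) : Prop :=
  in_diag l n /\
  exists nu, is_partition nu /\ forall x, in_diag nu x = in_diag l x && (x != n).

Definition tile_step (x y : node) : bool := (y == NE x) || (y == SE x).
Definition is_tile (t : seq node) : bool :=
  if t is x :: s then all is_node t && path tile_step x s else false.

(* Each step moves one column right, so the first node is the leftmost (start)
   and the last node is the rightmost (end). *)
Definition tstart (t : seq node) : node := head (0, 0) t.
Definition tend (t : seq node) : node := last (0, 0) t.

Definition is_dyck_tile (t : seq node) : bool :=
  is_tile t &&
  let h := \max_(n <- t) height n in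
  (height (tstart t) == h) && (height (tend t) == h).

Definition is_dyck_tiling (l m : seq nat) (T : seq (seq node)) : Prop :=
  all is_dyck_tile T /\ uniq (flatten T) /\
  forall n, (n \in flatten T) = in_skew l m n.

Definition cover_expansive (l m : seq nat) (T : seq (seq node)) : Prop :=
  (forall a t t', t \in T -> t' \in T ->
     in_skew l m a -> in_skew l m (SE a) -> a \in t -> SE a \in t' ->
     (ncol (tstart t') <= ncol (tstart t))%R) /\
  (forall a t t', t \in T -> t' \in T ->
     in_skew l m a -> in_skew l m (SW a) -> a \in t -> SW a \in t' ->
     (ncol (tend t) <= ncol (tend t'))%R).

From mathcomp Require Import all_boot all_algebra zify.
Set Implicit Arguments. Unset Strict Implicit.
Import GRing.Theory Num.Theory.

(* Let (a, b) be the addable node of m in column j and Z k := (a + k, b + k) the diagonal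
   through it. If (a, b) is not in l it is addable in l. Otherwise let Z d be the last node of
   the diagonal in l: Z d.+1 is addable in l, or Z d is removable, unless exactly one of
   U := (a + d.+1, b + d) = SW (Z d.+1) and V := (a + d, b + d.+1) = SE (Z d.+1) lies in l.
   Say U does. For i <= d the node (a + i.+1, b + i) is then in l \ m, and cover-expansiveness
   says that its SE neighbour Z i does not start a tile. The tile predecessor of Z i is
   (a + i, b + i - 1) or (a + i.+1, b + i); the first option is excluded for i = 0 (that node is
   in m) and then, inductively, by uniqueness of successors. So each Z i is entered by a
   descending step and cannot end its Dyck tile. Its successor is (a + i - 1, b + i) or
   (a + i, b + i.+1); the second option is excluded for i = d (it is V, not in l) and then,
   inductively downwards, by uniqueness of predecessors, which finally forces the successor
   (a - 1, b) of Z 0, a node of m: contradiction. The case of V is symmetric. *)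

Lemma nth_partition_le l i k : is_partition l -> i <= k -> nth 0 l k <= nth 0 l i.
Proof.
move=> /andP[l_sorted _] le_ik.
case: (ltnP k (size l)) => [lt_k|]; last by move/(nth_default 0) ->.
have lt_i : i < size l by apply: leq_ltn_trans lt_k.
have geq_trans : transitive geq by move=> x y z le_yx le_zy; exact: leq_trans le_zy le_yx.
exact: (sorted_leq_nth geq_trans (@leqnn) 0 l_sorted) le_ik.
Qed.

Lemma in_diag_le l x y : is_partition l -> is_node x ->
  x.1 <= y.1 -> x.2 <= y.2 -> in_diag l y -> in_diag l x.
Proof.
move=> l_part x_node le1 le2 /andP[_ y_in]; rewrite /in_diag x_node /=.
have : nth 0 l y.1.-1 <= nth 0 l x.1.-1 by apply: nth_partition_le; lia.
lia.
Qed.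

Lemma partition_of_nonincreasing (N : nat) (f : nat -> nat) :
  (forall i, f i.+1 <= f i) -> (forall i, N <= i -> f i = 0) ->
  exists nu, is_partition nu /\ forall i, nth 0 nu i = f i.
Proof.
elim: N f => [|N IH] f f_noninc f_zero.
  by exists [::]; split => // i; rewrite nth_nil f_zero.
case: (posnP (f 0)) => [f0_eq0|f0_gt0].
  exists [::]; split => // i; rewrite nth_nil.
  have : f i <= f 0 by elim: i => // i IHi; exact: leq_trans (f_noninc i) IHi.
  by rewrite f0_eq0 leqn0 => /eqP.
have [nu [/andP[nu_sorted nu_pos] nu_nth]] :=
  IH (fun i => f i.+1) (fun i => f_noninc i.+1) (fun i le_Ni => f_zero i.+1 le_Ni).
exists (f 0 :: nu); split; last by case.
apply/andP; split; last by rewrite /= f0_gt0.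
case: nu nu_nth nu_sorted {nu_pos} => [|y s] nu_nth //= ->; rewrite andbT.
by have /= -> := nu_nth 0.
Qed.

Lemma partition_set_row l i v : is_partition l ->
  nth 0 l i.+1 <= v -> (0 < i -> v <= nth 0 l i.-1) ->
  exists nu, is_partition nu /\
             forall k, nth 0 nu k = if k == i then v else nth 0 l k.
Proof.
move=> l_part next_le prev_ge.
apply: (@partition_of_nonincreasing (maxn (size l) i.+1)) => [k|k le_k].
  case: (eqVneq k.+1 i) => [Ek|_].
    by move: prev_ge; rewrite -Ek ltn_eqF //; apply.
  by case: eqVneq => [->|_] //; apply: nth_partition_le.
by rewrite (gtn_eqF (_ : i < k)) ?nth_default //; lia.
Qed.

Lemma addableP l x : is_partition l ->
  addable l x <-> [/\ is_node x, ~~ in_diag l x,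
                     1 < x.2 -> in_diag l (SW x) & 1 < x.1 -> in_diag l (SE x)].
Proof.
case: x => a b l_part; split.
  move=> [ab_notin [nu [nu_part nu_diag]]].
  have ab_in_nu : in_diag nu (a, b) by rewrite nu_diag eqxx orbT.
  have ab_node : is_node (a, b) by case/andP: ab_in_nu.
  have in_l y : is_node y -> y.1 <= a -> y.2 <= b -> y != (a, b) -> in_diag l y.
    move=> y_node le1 le2 /negbTE y_neq; rewrite -[in_diag l y]orbF -y_neq -nu_diag.
    exact: (in_diag_le (y := (a, b)) nu_part y_node le1 le2 ab_in_nu).
  move: ab_node => /andP[/= a_gt0 b_gt0].
  split=> //= [|lt_1b|lt_1a]; first by rewrite /is_node a_gt0 b_gt0.
    by apply: in_l; rewrite /is_node /= ?xpair_eqE /=; lia.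
  by apply: in_l; rewrite /is_node /= ?xpair_eqE /=; lia.
move=> [/andP[/= a_gt0 b_gt0] ab_notin SW_in SE_in].
have row_a : nth 0 l a.-1 = b.-1.
  move: ab_notin; rewrite /in_diag /is_node /= a_gt0 b_gt0 /= -ltnNge => lt_row.
  case: (ltnP 1 b) => [/SW_in /andP[_ /= le_row]|le_b1]; lia.
have [nu [nu_part nu_nth]] : exists nu, is_partition nu /\
    forall k, nth 0 nu k = if k == a.-1 then b else nth 0 l k.
  apply: partition_set_row => // [|lt_0a].
    by rewrite prednK // (leq_trans (nth_partition_le l_part (leq_pred a))) ?row_a ?leq_pred.
  have lt_1a : 1 < a by lia.
  by have /andP[_ /=] := SE_in lt_1a; lia.
split=> //; exists nu; split=> // -[y1 y2].
rewrite /in_diag /is_node /= nu_nth xpair_eqE.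
case: (eqVneq y1.-1 a.-1) => [eq_row|ne_row].
  case: (posnP y1) => [y1_eq0|y1_gt0]; first by rewrite y1_eq0 /=; lia.
  have -> : y1 = a by lia.
  rewrite row_a eqxx /=; lia.
by rewrite (_ : (y1 == a) = false) ?andbF ?orbF //; apply/eqP => eq_a; rewrite eq_a eqxx in ne_row.
Qed.

Lemma removable_corner l x : is_partition l ->
  in_diag l x -> ~~ in_diag l (NE x) -> ~~ in_diag l (x.1.+1, x.2) -> removable l x.
Proof.
case: x => a b l_part ab_in NE_notin below_notin; split=> //.
move: ab_in NE_notin below_notin; rewrite /in_diag /is_node /=.
move=> /andP[/andP[a_gt0 b_gt0] le_row]; rewrite a_gt0 b_gt0 /= -!ltnNge.
move=> lt_row lt_next.
have row_a : nth 0 l a.-1 = b by lia.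
have [nu [nu_part nu_nth]] : exists nu, is_partition nu /\
    forall k, nth 0 nu k = if k == a.-1 then b.-1 else nth 0 l k.
  apply: partition_set_row => // [|lt_0a]; first by rewrite prednK //; lia.
  have : nth 0 l a.-1 <= nth 0 l a.-1.-1 by apply: nth_partition_le; lia.
  lia.
exists nu; split=> // -[y1 y2].
rewrite /in_diag /is_node /= nu_nth xpair_eqE.
case: (eqVneq y1.-1 a.-1) => [eq_row|ne_row].
  case: (posnP y1) => [y1_eq0|y1_gt0]; first by rewrite y1_eq0.
  have -> : y1 = a by lia.
  rewrite row_a eqxx /=; lia.
by rewrite (_ : (y1 == a) = false) ?andbT //; apply/eqP => eq_a; rewrite eq_a eqxx in ne_row.
Qed.

Lemma ncol_NE x : ncol (NE x) = (ncol x + 1)%R.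
Proof. rewrite /ncol /NE /=; lia. Qed.

Lemma ncol_SE x : 0 < x.1 -> ncol (SE x) = (ncol x + 1)%R.
Proof. rewrite /ncol /SE /=; lia. Qed.

Lemma ncol_SW x : 0 < x.2 -> ncol (SW x) = (ncol x - 1)%R.
Proof. rewrite /ncol /SW /=; lia. Qed.

Lemma tile_step_ncol x y : is_node x -> tile_step x y -> ncol y = (ncol x + 1)%R.
Proof.
move=> /andP[x1_gt0 _] /orP[] /eqP ->; first exact: ncol_NE.
exact: ncol_SE.
Qed.

Lemma tile_ncol_nth t i : is_tile t -> i < size t ->
  ncol (nth (0, 0) t i) = (ncol (tstart t) + i%:Z)%R.
Proof.
elim: t i => [|x [|y s] IH] // [|i] t_tile lt_i /=; rewrite ?addr0 //.
move: t_tile => /andP[/= /and3P[x_node y_node s_nodes] /andP[xy_step ys_path]].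
rewrite (IH i) //; last by rewrite /is_tile /= y_node s_nodes.
rewrite /tstart /= (tile_step_ncol x_node xy_step); lia.
Qed.

Lemma tile_ncol_bounds t (x : node) : is_tile t -> x \in t ->
  (ncol (tstart t) <= ncol x <= ncol (tend t))%R.
Proof.
move=> t_tile x_in; have t_gt0 : 0 < size t by case: t {t_tile} x_in.
rewrite -(nth_index (0, 0) x_in) /tend -nth_last !tile_ncol_nth ?index_mem ?prednK //.
by rewrite lerDl lerD2l !lez_nat leq0n -ltnS prednK ?index_mem.
Qed.

Lemma dyck_tile_height_le t (x : node) : is_dyck_tile t -> x \in t ->
  height x <= height (tstart t) /\ height x <= height (tend t).
Proof.
move=> /andP[_ /andP[/eqP -> /eqP ->]] x_in.
by split; apply: (leq_bigmax_seq (F := height)).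
Qed.

Lemma mem_tiles_eq (T : seq (seq node)) t t' (x : node) : uniq (flatten T) ->
  t \in T -> t' \in T -> x \in t -> x \in t' -> t = t'.
Proof.
elim: T => [|t0 T IH] //=; rewrite cat_uniq => /and3P[_ t0_disjoint T_uniq].
have notin_t0 s : s \in T -> x \in s -> x \notin t0.
  move=> s_in x_in_s; apply: contra t0_disjoint => x_in_t0.
  by apply/hasP; exists x => //; apply/flattenP; exists s.
rewrite !inE => /predU1P[->|t_in] /predU1P[->|t'_in] x_in x_in' //.
- by rewrite (negPf (notin_t0 _ t'_in x_in')) in x_in.
- by rewrite (negPf (notin_t0 _ t_in x_in)) in x_in'.
- exact: IH.
Qed.

Definition tile_succ (T : seq (seq node)) (x y : node) : Prop :=
  exists2 t, t \in T &
    exists i, [/\ i.+1 < size t, nth (0, 0) t i = x & nth (0, 0) t i.+1 = y].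

Lemma tile_succ_mem T x y : tile_succ T x y -> exists2 t, t \in T & (x \in t) && (y \in t).
Proof. by move=> [t t_in [i [lt_i <- <-]]]; exists t => //; rewrite !mem_nth // ltnW. Qed.

Lemma tile_pred_exists T t x : t \in T -> x \in t -> x != tstart t -> exists y, tile_succ T y x.
Proof.
move=> t_in x_in; rewrite -(nth_index (0, 0) x_in) /tstart -nth0.
case: (index x t) (index_mem x t) => [|i]; first by rewrite eqxx.
by rewrite x_in => lt_i _; exists (nth (0, 0) t i), t => //; exists i.
Qed.

Lemma tile_succ_exists T t x : t \in T -> x \in t -> x != tend t -> exists y, tile_succ T x y.
Proof.
move=> t_in x_in; rewrite -(nth_index (0, 0) x_in) /tend -nth_last.
have := index_mem x t; rewrite x_in; case: (ltnP (index x t).+1 (size t)) => [lt_i _ _|le_i lt_i].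
  by exists (nth (0, 0) t (index x t).+1), t => //; exists (index x t).
by rewrite (_ : index x t = (size t).-1) ?eqxx //; lia.
Qed.

Section TileSuccessor.

Variable T : seq (seq node).
Hypotheses (T_dyck : all is_dyck_tile T) (T_uniq : uniq (flatten T)).

Lemma tile_succ_step x y : tile_succ T x y -> y = NE x \/ y = SE x.
Proof.
move=> [t t_in [i [lt_i <- <-]]].
have /andP[t_tile _] := allP T_dyck t t_in.
case: t t_in t_tile lt_i => [|x0 s] //= _ /andP[_ /(pathP (0, 0)) t_path] /t_path.
by rewrite /tile_step => /orP[] /eqP ->; [left|right].
Qed.

Lemma tile_succ_functional x y y' : tile_succ T x y -> tile_succ T x y' -> y = y'.
Proof.
move=> [t t_in [i [lt_i x_i <-]]] [t' t'_in [i' [lt_i' x_i' <-]]].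
have eq_t : t = t'.
  apply: (mem_tiles_eq T_uniq t_in t'_in (x := x));
  [rewrite -x_i | rewrite -x_i']; exact/mem_nth/ltnW.
subst t'; have /andP[t_tile _] := allP T_dyck t t_in.
have := tile_ncol_nth t_tile (ltnW lt_i); rewrite x_i -x_i' tile_ncol_nth ?(ltnW lt_i') //.
by move/addrI/eqP; rewrite eqz_nat => /eqP ->.
Qed.

Lemma tile_succ_injective x x' y : tile_succ T x y -> tile_succ T x' y -> x = x'.
Proof.
move=> [t t_in [i [lt_i <- y_i]]] [t' t'_in [i' [lt_i' <- y_i']]].
have eq_t : t = t'.
  apply: (mem_tiles_eq T_uniq t_in t'_in (x := y));
  [rewrite -y_i | rewrite -y_i']; exact/mem_nth.
subst t'; have /andP[t_tile _] := allP T_dyck t t_in.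
have := tile_ncol_nth t_tile lt_i; rewrite y_i -y_i' tile_ncol_nth //.
by move/addrI/eqP; rewrite eqz_nat eqSS => /eqP ->.
Qed.

Lemma tile_succ_down u z : tile_succ T u z -> height z < height u -> exists y, tile_succ T z y.
Proof.
move=> uz lt_h; have [t t_in /andP[u_in z_in]] := tile_succ_mem uz.
apply: (tile_succ_exists t_in z_in); apply: contraTneq lt_h => z_end.
by have [_] := dyck_tile_height_le (allP T_dyck t t_in) u_in; rewrite -z_end -leqNgt.
Qed.

Lemma tile_succ_up z v : tile_succ T z v -> height z < height v -> exists y, tile_succ T y z.
Proof.
move=> zv lt_h; have [t t_in /andP[z_in v_in]] := tile_succ_mem zv.
apply: (tile_pred_exists t_in z_in); apply: contraTneq lt_h => z_start.
by have [] := dyck_tile_height_le (allP T_dyck t t_in) v_in; rewrite -z_start -leqNgt.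
Qed.

End TileSuccessor.

Lemma tile_succ_skew l m T x y : is_dyck_tiling l m T -> tile_succ T x y ->
  in_skew l m x /\ in_skew l m y.
Proof.
move=> [_ [_ T_flatten]] /tile_succ_mem[t t_in /andP[x_in y_in]].
by rewrite -!T_flatten; split; apply/flattenP; exists t.
Qed.

Lemma cover_expansive_pred_SE l m T x : is_dyck_tiling l m T -> cover_expansive l m T ->
  in_skew l m x -> in_skew l m (SE x) -> exists y, tile_succ T y (SE x).
Proof.
move=> [T_dyck [_ T_flatten]] [SE_start _] x_in SEx_in.
have /flattenP[t t_in x_in_t] : x \in flatten T by rewrite T_flatten.
have /flattenP[t' t'_in SEx_in_t'] : SE x \in flatten T by rewrite T_flatten.
apply: (tile_pred_exists t'_in SEx_in_t'); apply/eqP => SEx_start.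
have := SE_start x t t' t_in t'_in x_in SEx_in x_in_t SEx_in_t'.
have /andP[t_tile _] := allP T_dyck t t_in.
have /andP[start_le _] := tile_ncol_bounds t_tile x_in_t.
have /andP[/andP[/andP[x1_gt0 _] _] _] := x_in.
rewrite -SEx_start ncol_SE //; lia.
Qed.

Lemma cover_expansive_succ_SW l m T x : is_dyck_tiling l m T -> cover_expansive l m T ->
  in_skew l m x -> in_skew l m (SW x) -> exists y, tile_succ T (SW x) y.
Proof.
move=> [T_dyck [_ T_flatten]] [_ SW_end] x_in SWx_in.
have /flattenP[t t_in x_in_t] : x \in flatten T by rewrite T_flatten.
have /flattenP[t' t'_in SWx_in_t'] : SW x \in flatten T by rewrite T_flatten.
apply: (tile_succ_exists t'_in SWx_in_t'); apply/eqP => SWx_end.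
have := SW_end x t t' t_in t'_in x_in SWx_in x_in_t SWx_in_t'.
have /andP[t_tile _] := allP T_dyck t t_in.
have /andP[_ le_end] := tile_ncol_bounds t_tile x_in_t.
have /andP[/andP[/andP[_ x2_gt0] _] _] := x_in.
rewrite -SWx_end ncol_SW //; lia.
Qed.

Lemma forced_predecessors (X : Type) (R : X -> X -> Prop) (Z U : nat -> X) d :
  (forall x y y', R x y -> R x y' -> y = y') ->
  (forall i, i < d -> Z i.+1 <> Z i) ->
  (forall i, i <= d -> R (U i) (Z i) \/ R (U i.+1) (Z i)) ->
  ~ R (U 0) (Z 0) ->
  forall i, i <= d -> R (U i.+1) (Z i).
Proof.
move=> R_functional Z_step Z_pred not_U0Z0.
elim=> [|i IH] le_i; first by case: (Z_pred 0 le_i).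
case: (Z_pred _ le_i) => // UZ.
by case: (Z_step i le_i); apply: R_functional UZ (IH (ltnW le_i)).
Qed.

Lemma zigzag_absurd (X : Type) (R : X -> X -> Prop) (Z U V : nat -> X) d :
  (forall x y y', R x y -> R x y' -> y = y') ->
  (forall x x' y, R x y -> R x' y -> x = x') ->
  (forall i, i < d -> Z i.+1 <> Z i) ->
  (forall i, i <= d -> R (U i) (Z i) \/ R (U i.+1) (Z i)) ->
  (forall i, i <= d -> R (U i.+1) (Z i) -> R (Z i) (V i) \/ R (Z i) (V i.+1)) ->
  ~ R (U 0) (Z 0) -> ~ R (Z d) (V d.+1) -> ~ R (Z 0) (V 0) -> False.
Proof.
move=> R_functional R_injective Z_step Z_pred Z_succ not_U0Z0 not_ZdVd1 not_Z0V0.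
have UZ := forced_predecessors R_functional Z_step Z_pred not_U0Z0.
(* the same induction for the converse relation, run from [d] down to [0] *)
suff VZ : forall i, i <= d -> R (Z (d - i)) (V (d - i)).
  by apply: not_Z0V0; have := VZ d (leqnn d); rewrite subnn.
apply: (@forced_predecessors X (fun x y => R y x) (fun i => Z (d - i)) (fun i => V (d.+1 - i))).
- by move=> x y y' Ryx Ry'x; apply: R_injective Ryx Ry'x.
- by move=> i lt_i; rewrite -(subnSK lt_i) => /esym; apply: Z_step; lia.
- move=> i le_i; rewrite subSS subSn //.
  by case: (Z_succ (d - i) (leq_subr _ _) (UZ _ (leq_subr _ _))); [right | left].
- by rewrite !subn0.
Qed.

Section DiagonalOfAddableNode.

Variables (l m : seq nat) (T : seq (seq node)) (a b d : nat).
Hypotheses (l_part : is_partition l) (m_part : is_partition m).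
Hypotheses (T_tiling : is_dyck_tiling l m T) (T_cover : cover_expansive l m T).
Hypotheses (ab_addable : addable m (a, b)) (Zd_in : in_diag l (a + d, b + d)).

Let Z k : node := (a + k, b + k).
Let U k : node := (a + k, (b + k).-1).
Let V k : node := ((a + k).-1, b + k).

Let a_gt0 : 0 < a.
Proof. by have [/andP[]] := (addableP _ m_part).1 ab_addable. Qed.

Lemma in_skew_of_le x y : a <= x.1 -> b <= x.2 -> x.1 <= y.1 -> x.2 <= y.2 ->
  in_diag l y -> in_skew l m x.
Proof.
have [/andP[/= _ b_gt0] ab_notin _ _] := (addableP _ m_part).1 ab_addable.
move=> le1 le2 le1' le2' y_in.
have x_node : is_node x by rewrite /is_node; lia.
rewrite /in_skew (in_diag_le l_part x_node le1' le2' y_in) /=.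
by apply: contra ab_notin; apply: (in_diag_le (x := (a, b)) m_part); rewrite /is_node ?a_gt0.
Qed.

Lemma Z_in_skew i : i <= d -> in_skew l m (Z i).
Proof. by move=> le_i; apply: (in_skew_of_le (y := Z d)) => //=; lia. Qed.

Lemma U0_notin_skew : ~~ in_skew l m (U 0).
Proof.
have [_ _ SW_in _] := (addableP _ m_part).1 ab_addable.
rewrite /U !addn0 /in_skew negb_and negbK.
case: (ltnP 1 b) => [/SW_in -> | le_b1]; first by rewrite orbT.
by rewrite /in_diag /is_node /=; lia.
Qed.

Lemma V0_notin_skew : ~~ in_skew l m (V 0).
Proof.
have [_ _ _ SE_in] := (addableP _ m_part).1 ab_addable.
rewrite /V !addn0 /in_skew negb_and negbK.
case: (ltnP 1 a) => [/SE_in -> | le_a1]; first by rewrite orbT.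
by rewrite /in_diag /is_node /=; lia.
Qed.

Lemma Z_pred_cases i y : tile_succ T y (Z i) -> y = U i \/ y = U i.+1.
Proof.
case: y => y1 y2 /(tile_succ_step T_tiling.1).
by rewrite /Z /U /NE /SE /= => -[[E1 E2]|[E1 E2]]; [left|right]; congr pair; lia.
Qed.

Lemma Z_succ_cases i y : tile_succ T (Z i) y -> y = V i \/ y = V i.+1.
Proof.
case: y => y1 y2 /(tile_succ_step T_tiling.1).
by rewrite /Z /V /NE /SE /= => -[[E1 E2]|[E1 E2]]; [right|left]; congr pair; lia.
Qed.

Let Z_step i : i < d -> Z i.+1 <> Z i.
Proof. by move=> _ [E]; lia. Qed.

Lemma border_SW_to_SE : in_diag l (a + d.+1, b + d) -> in_diag l (a + d, b + d.+1).
Proof.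
have [T_dyck [T_uniq _]] := T_tiling.
move=> U_in; apply/negPn/negP => V_notin.
apply: (@zigzag_absurd _ (tile_succ T) Z U V d); first exact: tile_succ_functional.
- exact: tile_succ_injective.
- exact: Z_step.
- move=> i le_i.
  have U_skew : in_skew l m (U i.+1).
    by apply: (in_skew_of_le (y := (a + d.+1, b + d))) => //=; lia.
  have [y yZ] : exists y, tile_succ T y (Z i).
    have SE_U : SE (U i.+1) = Z i by rewrite /Z /U /SE /=; congr pair; lia.
    rewrite -SE_U; apply: (cover_expansive_pred_SE T_tiling T_cover U_skew).
    by rewrite SE_U Z_in_skew.
  by case: (Z_pred_cases yZ) => <-; [left|right].
- move=> i le_i UZ; have [|y Zy] := tile_succ_down T_dyck UZ.
    by rewrite /height /U /Z /=; lia.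
  by case: (Z_succ_cases Zy) => <-; [left|right].
- by move=> /(tile_succ_skew T_tiling)[U0_skew _]; exact: (negP U0_notin_skew).
- move=> /(tile_succ_skew T_tiling)[_ /andP[V_in _]].
  by move: V_in; rewrite /V addnS (negPf V_notin).
- by move=> /(tile_succ_skew T_tiling)[_ V0_skew]; exact: (negP V0_notin_skew).
Qed.

Lemma border_SE_to_SW : in_diag l (a + d, b + d.+1) -> in_diag l (a + d.+1, b + d).
Proof.
have [T_dyck [T_uniq _]] := T_tiling.
move=> V_in; apply/negPn/negP => U_notin.
apply: (@zigzag_absurd _ (fun x y => tile_succ T y x) Z V U d).
- by move=> x y y'; apply: tile_succ_injective.
- by move=> x x' y; apply: tile_succ_functional.
- exact: Z_step.
- move=> i le_i.
  have V_skew : in_skew l m (V i.+1).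
    by apply: (in_skew_of_le (y := (a + d, b + d.+1))) => //=; lia.
  have [y Zy] : exists y, tile_succ T (Z i) y.
    have SW_V : SW (V i.+1) = Z i by rewrite /Z /V /SW /=; congr pair; lia.
    rewrite -SW_V; apply: (cover_expansive_succ_SW T_tiling T_cover V_skew).
    by rewrite SW_V Z_in_skew.
  by case: (Z_succ_cases Zy) => <-; [left|right].
- move=> i le_i ZV; have [|y yZ] := tile_succ_up T_dyck ZV.
    by rewrite /height /V /Z /=; lia.
  by case: (Z_pred_cases yZ) => <-; [left|right].
- by move=> /(tile_succ_skew T_tiling)[_ V0_skew]; exact: (negP V0_notin_skew).
- move=> /(tile_succ_skew T_tiling)[/andP[U_in _] _].
  by move: U_in; rewrite /U [b + _]addnS (negPf U_notin).
- by move=> /(tile_succ_skew T_tiling)[U0_skew _]; exact: (negP U0_notin_skew).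
Qed.

End DiagonalOfAddableNode.

Theorem lemma4p5 (l m : seq nat) (j : int) :
  is_partition l -> is_partition m ->
  (forall n, in_diag m n -> in_diag l n) ->
  (exists n, addable m n /\ ncol n = j) ->
  (exists T, is_dyck_tiling l m T /\ cover_expansive l m T) ->
  exists n, (addable l n \/ removable l n) /\ ncol n = j.
Proof.
move=> l_part m_part m_sub_l [[a b] [ab_addable <-]] [T [T_tiling T_cover]].
have [ab_node _ SW_in_m SE_in_m] := (addableP _ m_part).1 ab_addable.
have ncol_diag k : ncol (a + k, b + k) = ncol (a, b) by rewrite /ncol /=; lia.
have [ab_in_l|ab_notin_l] := boolP (in_diag l (a, b)); last first.
  exists (a, b); split=> //; left; apply/addableP => //.
  by split=> // [/SW_in_m|/SE_in_m]; apply: m_sub_l.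
have diag_bounded k : in_diag l (a + k, b + k) -> k <= size l.
  move=> /andP[_ /= le_row]; case: (ltnP (a + k).-1 (size l)) => [|ge_size]; first lia.
  by move: le_row; rewrite nth_default //; lia.
have [|d Zd_in d_max] := @ex_maxnP _ _ _ diag_bounded; first by exists 0; rewrite !addn0.
have Zd1_notin : ~~ in_diag l (a + d.+1, b + d.+1) by apply/negP => /d_max; rewrite ltnn.
have border_SW := border_SW_to_SE l_part m_part T_tiling T_cover ab_addable Zd_in.
have border_SE := border_SE_to_SW l_part m_part T_tiling T_cover ab_addable Zd_in.
have [SW_in|SW_notin] := boolP (in_diag l (a + d.+1, b + d)).
- exists (a + d.+1, b + d.+1); split; last exact: ncol_diag.
  left; apply/addableP => //; split=> //= [|_|_]; first by rewrite /is_node /=; lia.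
    by rewrite /SW /= [b + _]addnS.
  by rewrite /SE /= addnS border_SW.
- exists (a + d, b + d); split; last exact: ncol_diag.
  right; apply: removable_corner; rewrite //= /NE /= -addnS //.
  exact: contra border_SE SW_notin.
Qed.
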